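(* Let $n\ge 2$, let $\mathcal{S}\subseteq(\mathbb{C}^d)^{\otimes n}$ be the permutation-symmetric subspace, and let $X,Y$ be $d\times d$ complex matrices. Suppose $|\psi\rangle\in\mathcal{S}$, $X_{(1)}|\psi\rangle\in\mathcal{S}$ and $Y_{(2)}|\psi\rangle\in\mathcal{S}$. Then $X_{(1)}Y_{(2)}|\psi\rangle\in\mathcal{S}$ if and only if $[X_{(1)},Y_{(1)}]|\psi\rangle=0$.
   Context: $\mathcal{S}$ is the set of vectors in $(\mathbb{C}^d)^{\otimes n}$ invariant under all permutations of the $n$ tensor factors. For a $d\times d$ matrix $X$ and $1\le k\le n$, $X_{(k)}$ denotes the operator on $(\mathbb{C}^d)^{\otimes n}$ acting as $X$ on the $k$-th tensor factor and as the identity on all others. $[P,Q]=PQ-QP$. *)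

(* scalars are algC (algebraic closure of Q, an algebraically
   closed numeric field standing for the complex numbers). *)
From HB Require Import structures.
From mathcomp Require Import all_boot all_order all_algebra all_fingroup all_field.
Set Implicit Arguments. Unset Strict Implicit. Unset Printing Implicit Defensive.
Import GRing.Theory.
Local Open Scope ring_scope.

(* Basis indices of (C^d)^{\otimes n}: maps from tensor positions to 'I_d. *)
Definition tidx (n d : nat) := {ffun 'I_n -> 'I_d}.

(* Vectors of (C^d)^{\otimes n}, given by their coordinates in the product basis. *)
Definition tvec (n d : nat) := {ffun tidx n d -> algC}.

Definition setidx (n d : nat) (i : tidx n d) (k : 'I_n) (j : 'I_d) : tidx n d :=
  [ffun m => if m == k then j else i m].

(* X_(k): X acting on the k-th tensor factor, identity elsewhere. *)
Definition act_on (n d : nat) (k : 'I_n) (X : 'M[algC]_d) (psi : tvec n d) : tvec n d :=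
  [ffun i : tidx n d => \sum_(j < d) X (i k) j * psi (setidx i k j)].

Definition symmetric_vec (n d : nat) (psi : tvec n d) : Prop :=
  forall (s : 'S_n) (i : tidx n d), psi [ffun m => i (s m)] = psi i.

(* The first and second tensor positions (0-based ordinals 0 and 1), for n >= 2. *)
Definition pos1 (n : nat) (hn : (2 <= n)%N) : 'I_n := Ordinal (ltnW hn).
Definition pos2 (n : nat) (hn : (2 <= n)%N) : 'I_n := Ordinal hn.

(* For a symmetric vector v, relabelling the tensor factors by s turns X_(k) v
   into X_(s k) v; hence X_(k) v is symmetric exactly when X_(c) v does not
   depend on the position c.  Apply this to v = Y_(2) psi: for c <> 2 the
   operators X_(c) and Y_(2) act on different factors and commute, so
   X_(c) Y_(2) psi = Y_(2) X_(1) psi = X_(1) Y_(2) psi holds automatically,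
   and the only remaining condition, X_(2) Y_(2) psi = X_(1) Y_(2) psi, becomes
   X_(1) Y_(1) psi = Y_(1) X_(1) psi after moving Y_(2) and X_(2) to the first
   factor. *)
From mathcomp Require Import all_boot all_order all_algebra all_fingroup all_field.
Local Open Scope ring_scope.
Import GRing.Theory.

Section TensorAction.
Context {n d : nat}.
Implicit Types (X Y : 'M[algC]_d) (v : tvec n d).

Lemma act_on_perm (k : 'I_n) X v (s : 'S_n) (i : tidx n d) :
  symmetric_vec v -> act_on k X v [ffun m => i (s m)] = act_on (s k) X v i.
Proof.
move=> sym_v; rewrite !ffunE; apply: eq_bigr => j _; congr (_ * _).
rewrite -[RHS](sym_v s); congr (v _); apply/ffunP => m.
by rewrite !ffunE (inj_eq (@perm_inj _ s)).
Qed.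

Lemma symmetric_act_onP (k : 'I_n) X v : symmetric_vec v ->
  symmetric_vec (act_on k X v) <-> forall c, act_on c X v = act_on k X v.
Proof.
move=> sym_v; split=> [sym_Xv c|Xv_indep s i].
  by apply/ffunP => i; rewrite -{1}(tpermL k c) -act_on_perm.
by rewrite act_on_perm // Xv_indep.
Qed.

Lemma act_onC (c k : 'I_n) X Y v :
  c != k -> act_on c X (act_on k Y v) = act_on k Y (act_on c X v).
Proof.
move=> neq_ck; apply/ffunP => i; rewrite !ffunE.
under eq_bigr => j _ do rewrite ffunE big_distrr.
under [RHS]eq_bigr => j _ do rewrite ffunE big_distrr.
rewrite exchange_big /=; apply: eq_bigr => j _; apply: eq_bigr => j' _.
rewrite !ffunE eq_sym !(negbTE neq_ck) !mulrA [X _ _ * Y _ _]mulrC.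
congr (_ * v _); apply/ffunP => m; rewrite !ffunE.
by case: (eqVneq m k) => [->|//]; rewrite eq_sym (negbTE neq_ck).
Qed.

End TensorAction.

Theorem lemma2 (d n : nat) (hn : (2 <= n)%N) (X Y : 'M[algC]_d) (psi : tvec n d) :
  symmetric_vec psi ->
  symmetric_vec (act_on (pos1 hn) X psi) ->
  symmetric_vec (act_on (pos2 hn) Y psi) ->
  (symmetric_vec (act_on (pos1 hn) X (act_on (pos2 hn) Y psi)) <->
   act_on (pos1 hn) X (act_on (pos1 hn) Y psi)
     - act_on (pos1 hn) Y (act_on (pos1 hn) X psi) = 0).
Proof.
set p1 := pos1 hn; set p2 := pos2 hn => sym_psi sym_Xpsi sym_Ypsi.
have neq12 : p1 != p2 by [].
have X_indep := (symmetric_act_onP p1 X _ sym_psi).1 sym_Xpsi.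
have Y_indep := (symmetric_act_onP p2 Y _ sym_psi).1 sym_Ypsi.
have commutator_eq : act_on p1 X (act_on p1 Y psi) - act_on p1 Y (act_on p1 X psi) = 0
    <-> act_on p2 X (act_on p2 Y psi) = act_on p1 X (act_on p2 Y psi).
  rewrite (Y_indep p1) -(X_indep p2) (act_onC p1 p2 Y X) // (Y_indep p1).
  by split=> [/subr0_eq | ->]; rewrite ?subrr.
apply: iff_trans (symmetric_act_onP _ _ _ sym_Ypsi) (iff_trans _ (iff_sym commutator_eq)).
split=> [-> // | XY_eq c].
have [->|neq_c2] := eqVneq c p2; first exact: XY_eq.
by rewrite (act_onC c p2) // (X_indep c) -(act_onC p1 p2).
Qed.
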